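(* Let $G$ be a finite group, $H\subset G$ a subgroup and $p\in[1,+\infty]$. Then $A_p(H)\leq A_p(G)$.
   Context: For a finite group $G$, $A_p(G)=\big(\sum_\rho\dim(\rho)^p\big)^{1/p}$ for $p<\infty$ and $A_\infty(G)=\max_\rho\dim(\rho)$, where $\rho$ runs over the isomorphism classes of irreducible complex linear representations of $G$. *)

From HB Require Import structures.
From mathcomp Require Import all_boot all_order all_algebra all_fingroup all_solvable all_field all_character.
From mathcomp Require Import all_classical all_reals all_analysis.
Set Implicit Arguments. Unset Strict Implicit. Unset Printing Implicit Defensive.
Import Order.TTheory GRing.Theory Num.Theory.
Local Open Scope ring_scope.

(* dim(rho) for the i-th irreducible complex representation 'Chi_i of G
   (irreducible characters 'chi_i, i : Iirr G, index the isomorphism classes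
   of irreducible complex representations; 'Chi_i affords 'chi_i). *)
Definition irr_dim (gT : finGroupType) (G : {group gT}) (i : Iirr G) : nat :=
  irr_degree (socle_of_Iirr i).

Definition Ap (R : realType) (p : \bar R) (gT : finGroupType) (G : {group gT}) : R :=
  match p with
  | EFin q => powR (\sum_(i : Iirr G) powR (irr_dim i)%:R q) q^-1
  | +oo%E => ((\max_(i : Iirr G) irr_dim i)%N)%:R
  | -oo%E => 0
  end.

From mathcomp Require Import all_boot all_order all_algebra all_fingroup all_solvable all_field all_character.
From mathcomp Require Import all_classical all_reals all_analysis.
Set Implicit Arguments. Unset Strict Implicit. Unset Printing Implicit Defensive.
Import Order.TTheory GRing.Theory Num.Theory.
Local Open Scope ring_scope.

(* Restricting an irreducible representation of G to H writes its dimension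
   as sum_j m_j e_j, with e_j the dimensions of the irreducibles of H and
   natural multiplicities m_j; by Frobenius reciprocity every irreducible of H
   occurs in some restriction, since its induced character is nonzero. As x^q
   is superadditive on nonnegative reals for q >= 1, sum_j m_j e_j^q <=
   (sum_j m_j e_j)^q, and summing over G gives sum_H dim^q <= sum_G dim^q.
   For p = oo each dimension for H is bounded by one for G. *)

Section SuperadditivePowR.
Variable R : realType.

Lemma sum_natmul_powR_le (J : finType) (m : J -> nat) (x : J -> R) (q : R) :
  1 <= q -> (forall j, 0 <= x j) ->
  \sum_j (m j)%:R * x j `^ q <= (\sum_j (m j)%:R * x j) `^ q.
Proof.
move=> q_ge1 x_ge0; set S := \sum_j (m j)%:R * x j.
have q_gt0 : 0 < q by apply: lt_le_trans q_ge1.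
have S_ge0 : 0 <= S by apply: sumr_ge0 => j _; rewrite mulr_ge0.
have x_le_S j : (0 < m j)%N -> x j <= S.
  move=> m_gt0; apply: (@le_trans _ _ ((m j)%:R * x j)).
    by rewrite ler_peMl // ler1n.
  by rewrite /S (bigD1 j) //= lerDl sumr_ge0 // => k _; rewrite mulr_ge0.
(* S^q = \sum_j m_j x_j S^(q-1), and x_j^(q-1) <= S^(q-1) wherever m_j > 0. *)
rewrite -(mulr_powRB1 S_ge0 q_gt0) /S mulr_suml; apply: ler_sum => j _.
rewrite -mulr_powRB1 // mulrA; have [->|m_gt0] := posnP (m j); first by rewrite !mul0r.
rewrite ler_wpM2l ?mulr_ge0 //; apply: ge0_ler_powR; rewrite ?nnegrE ?x_le_S //.
by rewrite subr_ge0.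
Qed.

Lemma sum_powR_le_covering (I J : finType) (m : I -> J -> nat)
    (e : J -> R) (d : I -> R) (q : R) :
  1 <= q -> (forall j, 0 <= e j) ->
  (forall i, d i = \sum_j (m i j)%:R * e j) ->
  (forall j, exists i, (0 < m i j)%N) ->
  \sum_j e j `^ q <= \sum_i d i `^ q.
Proof.
move=> q_ge1 e_ge0 dE m_cover.
apply: (@le_trans _ _ (\sum_j \sum_i (m i j)%:R * e j `^ q)).
  apply: ler_sum => j _; have [i0 m_gt0] := m_cover j.
  rewrite (bigD1 i0) //= -[leLHS]addr0; apply: lerD.
    by rewrite ler_peMl ?powR_ge0 // ler1n.
  by apply: sumr_ge0 => i _; rewrite mulr_ge0 ?powR_ge0.
rewrite exchange_big; apply: ler_sum => i _.
by rewrite dE sum_natmul_powR_le.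
Qed.

End SuperadditivePowR.

Section RestrictionMultiplicity.
Variables (gT : finGroupType) (G H : {group gT}).

Definition res_mult (i : Iirr G) (j : Iirr H) : nat :=
  Num.truncn '['Res[H] 'chi_i, 'chi_j].

Lemma res_multE i j : (res_mult i j)%:R = '['Res[H] 'chi_i, 'chi_j].
Proof. by rewrite truncnK // Cnat_cfdot_char ?cfRes_char ?irr_char. Qed.

Lemma irr_dim_Res i : irr_dim i = (\sum_j res_mult i j * irr_dim j)%N.
Proof.
apply/eqP; rewrite -(eqr_nat algC) -irr1_degree -(cfRes1 H).
rewrite {1}[cfRes _ _]cfun_sum_cfdot sum_cfunE natr_sum; apply/eqP/eq_bigr => j _.
by rewrite cfunE natrM res_multE irr1_degree.
Qed.

Lemma irr_dim_le_Res i j : (0 < res_mult i j)%N -> (irr_dim j <= irr_dim i)%N.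
Proof.
move=> m_gt0; rewrite irr_dim_Res (bigD1 j) //=.
exact: leq_trans (leq_pmull _ m_gt0) (leq_addr _ _).
Qed.

Hypothesis sHG : (H \subset G)%g.

Lemma res_mult_cover j : exists i, (0 < res_mult i j)%N.
Proof.
have [i] := neq0_has_constt (Ind_irr_neq0 j sHG).
rewrite constt_Ind_Res irr_consttE -res_multE pnatr_eq0 => nz.
by exists i; rewrite lt0n.
Qed.

End RestrictionMultiplicity.

Theorem lemma7p1 (gT : finGroupType) (G H : {group gT}) (R : realType) (p : \bar R) :
  (H \subset G)%g -> (1%:E <= p)%E -> (Ap p H <= Ap p G)%R.
Proof.
move=> sHG; case: p => [q||] //= => [q_ge1 | _].
- rewrite lee_fin in q_ge1; have q_ge0 : 0 <= q by apply: le_trans q_ge1.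
  have sum_ge0 (K : {group gT}) : 0 <= \sum_(k : Iirr K) (irr_dim k)%:R `^ q.
    by apply: sumr_ge0 => k _; rewrite powR_ge0.
  apply: ge0_ler_powR; rewrite ?invr_ge0 ?nnegrE ?sum_ge0 //.
  apply: (sum_powR_le_covering q_ge1 _ _ (res_mult_cover sHG)) => [j|i].
    by rewrite ler0n.
  by rewrite (irr_dim_Res H) natr_sum; apply: eq_bigr => j _; rewrite natrM.
- rewrite ler_nat; apply/bigmax_leqP => j _.
  have [i /irr_dim_le_Res le_ji] := res_mult_cover sHG j.
  exact: leq_trans le_ji (leq_bigmax i).
Qed.
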